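(* Let $I,J\subset\mathbb{R}$ be intervals and $f:I\times J\to I$, $f_\lambda(x)=f(x,\lambda)$, a $C^1$ family of $C^2$ interval maps; fix $\lambda_0\in J$. Suppose $(x,\lambda_0)$ is a chain explosion point for which there is $\delta>0$ such that no point of $B_\delta(x)$ is chain recurrent for $f_\lambda$ for all $\lambda<\lambda_0$, while $x$ is chain recurrent for $f_{\lambda_0}$. Then $f_{\lambda_0}(x)$ is chain recurrent for $f_{\lambda_0}$. Moreover, if $x_{-1}$ is a preimage of $x$ (i.e. $f_{\lambda_0}(x_{-1})=x$), then there is $\delta_{-1}>0$ such that no point of $B_{\delta_{-1}}(x_{-1})$ is chain recurrent for $f_\lambda$ for all $\lambda<\lambda_0$.
   Context: For a map $g$, an $\epsilon$-chain from $x$ to $y$ is a finite sequence $z_0=x,z_1,\dots,z_N=y$ with $|g(z_{n-1})-z_n|<\epsilon$ for all $n$. A point $x$ is chain recurrent for $g$ if for every $\epsilon>0$ there is an $\epsilon$-chain from $x$ to itself with $N>0$. A point $(x,\lambda_0)$ is a chain explosion point if $x$ is chain recurrent for $f_{\lambda_0}$ but there is a neighborhood $N$ of $x$ such that on one side of $\lambda_0$ no point of $N$ is chain recurrent for $f_\lambda$. $B_\delta(x)$ denotes the open ball of radius $\delta$ about $x$. *)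

From Stdlib Require Import Reals Lra Lia.
Open Scope R_scope.

Definition is_interval (I : R -> Prop) : Prop :=
  (forall a b c, I a -> I c -> a <= b <= c -> I b) /\
  (exists a b, a < b /\ I a /\ I b).

Definition continuous_on (D : R -> Prop) (g : R -> R) : Prop :=
  forall x, D x -> forall eps, 0 < eps -> exists delta, 0 < delta /\
    forall y, D y -> Rabs (y - x) < delta -> Rabs (g y - g x) < eps.

Definition has_deriv_on (D : R -> Prop) (g g' : R -> R) : Prop :=
  forall x, D x -> forall eps, 0 < eps -> exists delta, 0 < delta /\
    forall y, D y -> Rabs (y - x) < delta ->
      Rabs (g y - g x - g' x * (y - x)) <= eps * Rabs (y - x).

Definition C2_on (D : R -> Prop) (g : R -> R) : Prop :=
  exists g1 g2 : R -> R,
    has_deriv_on D g g1 /\ has_deriv_on D g1 g2 /\ continuous_on D g2.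

Definition continuous_on2 (I J : R -> Prop) (h : R -> R -> R) : Prop :=
  forall x l, I x -> J l -> forall eps, 0 < eps -> exists delta, 0 < delta /\
    forall y m, I y -> J m -> Rabs (y - x) < delta -> Rabs (m - l) < delta ->
      Rabs (h y m - h x l) < eps.

Definition C1_on2 (I J : R -> Prop) (h : R -> R -> R) : Prop :=
  exists hx hl : R -> R -> R,
    continuous_on2 I J hx /\ continuous_on2 I J hl /\
    forall x l, I x -> J l -> forall eps, 0 < eps -> exists delta, 0 < delta /\
      forall y m, I y -> J m -> Rabs (y - x) < delta -> Rabs (m - l) < delta ->
        Rabs (h y m - h x l - hx x l * (y - x) - hl x l * (m - l))
          <= eps * (Rabs (y - x) + Rabs (m - l)).

Definition eps_chain (D : R -> Prop) (g : R -> R) (eps : R) (x y : R)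
    (N : nat) (z : nat -> R) : Prop :=
  z 0%nat = x /\ z N = y /\
  (forall n, (n <= N)%nat -> D (z n)) /\
  (forall n, (1 <= n <= N)%nat -> Rabs (g (z (n - 1)%nat) - z n) < eps).

Definition chain_recurrent (D : R -> Prop) (g : R -> R) (x : R) : Prop :=
  D x /\ forall eps, 0 < eps ->
    exists (N : nat) (z : nat -> R), (0 < N)%nat /\ eps_chain D g eps x x N z.

From Stdlib Require Import Reals Lra Lia.
Open Scope R_scope.

(* If y = z_0, z_1, ..., z_N = y is a fine
   chain for a continuous g, then g y, z_2, ..., z_N, g y is again a chain:
   its first step is controlled because z_1 is close to g y, hence g z_1 is
   close to g (g y).  For the preimage x_{-1}, joint continuity maps a small ball
   around x_{-1} into B_delta(x) for all parameters close to lam0, and a chain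
   recurrent point there would have a chain recurrent image in B_delta(x). *)

Section Chains.

Variables (D : R -> Prop) (g : R -> R).

Lemma eps_chain_rotate eps x y y' N z :
  (0 < N)%nat -> D y' -> Rabs (g y - y') < eps ->
  eps_chain D g eps x y N z ->
  eps_chain D g eps (z 1%nat) y' N
    (fun n => if Nat.ltb n N then z (S n) else y').
Proof.
  intros HN Hy' Hlast [_ [HzN [HD Hstep]]].
  split; [|split; [|split]].
  - destruct (Nat.ltb_spec 0 N); [reflexivity | lia].
  - destruct (Nat.ltb_spec N N); [lia | reflexivity].
  - intros n Hn; destruct (Nat.ltb_spec n N); [apply HD; lia | exact Hy'].
  - intros n Hn.
    destruct (Nat.ltb_spec (n - 1) N); [|lia].
    replace (S (n - 1)) with n by lia.
    destruct (Nat.ltb_spec n N).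
    + specialize (Hstep (S n) ltac:(lia)).
      now replace (S n - 1)%nat with n in Hstep by lia.
    + replace n with N by lia; now rewrite HzN.
Qed.

Lemma eps_chain_replace_head eps e1 e2 x x' y N z :
  (0 < N)%nat -> e1 + e2 <= eps -> D x' -> Rabs (g x' - g x) < e2 ->
  eps_chain D g e1 x y N z ->
  eps_chain D g eps x' y N (fun n => if Nat.eqb n 0 then x' else z n).
Proof.
  intros HN Heps Hx' Hhead [Hz0 [HzN [HD Hstep]]].
  pose proof (Rabs_pos (g x' - g x)).
  split; [|split; [|split]].
  - reflexivity.
  - destruct (Nat.eqb_spec N 0); [lia | exact HzN].
  - intros n Hn; destruct (Nat.eqb_spec n 0); [exact Hx' | apply HD; lia].
  - intros n Hn.
    destruct (Nat.eqb_spec n 0); [lia|].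
    specialize (Hstep n Hn).
    destruct (Nat.eqb_spec (n - 1) 0) as [Hfirst|]; [|lra].
    rewrite Hfirst, Hz0 in Hstep.
    replace (g x' - z n) with ((g x' - g x) + (g x - z n)) by ring.
    pose proof (Rabs_triang (g x' - g x) (g x - z n)); lra.
Qed.

Hypothesis g_maps : forall u, D u -> D (g u).

Lemma chain_recurrent_image y :
  continuous_on D g -> chain_recurrent D g y -> chain_recurrent D g (g y).
Proof.
  intros Hcont [Hy Hcr].
  split; [now apply g_maps|].
  intros e He.
  destruct (Hcont (g y) (g_maps y Hy) (e / 2)) as [d [Hd Hnear]]; [lra|].
  pose proof (Rmin_l d (e / 2)); pose proof (Rmin_r d (e / 2)).
  set (e1 := Rmin d (e / 2)) in *.
  assert (He1 : 0 < e1) by (apply Rmin_pos; lra).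
  destruct (Hcr e1 He1) as [N [z [HN Hz]]].
  pose proof Hz as [Hz0 [HzN [HD Hstep]]].
  assert (Hz1 : Rabs (z 1%nat - g y) < d).
  { specialize (Hstep 1%nat ltac:(lia)); simpl in Hstep.
    rewrite Hz0, Rabs_minus_sym in Hstep; lra. }
  exists N, (fun n => if Nat.eqb n 0 then g y
                      else if Nat.ltb n N then z (S n) else g y).
  split; [exact HN|].
  apply (eps_chain_replace_head e e1 (e / 2) (z 1%nat)); auto.
  - lra.
  - rewrite Rabs_minus_sym; apply Hnear; auto; apply HD; lia.
  - apply eps_chain_rotate with (x := y) (y := y); auto.
    now rewrite <- HzN, Rminus_diag, Rabs_R0.
Qed.

End Chains.

Lemma C1_on2_continuous_on2 (I J : R -> Prop) (h : R -> R -> R) :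
  C1_on2 I J h -> continuous_on2 I J h.
Proof.
  intros [hx [hl [_ [_ Hdiff]]]] x l Ix Jl e He.
  destruct (Hdiff x l Ix Jl 1 Rlt_0_1) as [d [Hd Hlin]].
  set (K := 1 + Rabs (hx x l) + Rabs (hl x l)).
  pose proof (Rabs_pos (hx x l)); pose proof (Rabs_pos (hl x l)).
  assert (HK : 0 < K) by (unfold K; lra).
  exists (Rmin d (e / (2 * K))); split.
  { apply Rmin_pos; [lra|]; apply Rdiv_lt_0_compat; lra. }
  intros y m Iy Jm Hy Hm.
  pose proof (Rmin_l d (e / (2 * K))); pose proof (Rmin_r d (e / (2 * K))).
  pose proof (Rabs_pos (y - x)); pose proof (Rabs_pos (m - l)).
  specialize (Hlin y m Iy Jm ltac:(lra) ltac:(lra)).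
  assert (Hbound : Rabs (h y m - h x l) <= K * (Rabs (y - x) + Rabs (m - l))).
  { set (A := h y m - h x l - hx x l * (y - x) - hl x l * (m - l)) in Hlin.
    replace (h y m - h x l) with (A + hx x l * (y - x) + hl x l * (m - l))
      by (unfold A; ring).
    pose proof (Rabs_triang (A + hx x l * (y - x)) (hl x l * (m - l))).
    pose proof (Rabs_triang A (hx x l * (y - x))).
    rewrite !Rabs_mult in *; unfold K; nra. }
  assert (Hsmall : Rabs (y - x) + Rabs (m - l) < e / K).
  { replace (e / K) with (2 * (e / (2 * K))) by (field; lra); lra. }
  apply Rle_lt_trans with (1 := Hbound).
  replace e with (K * (e / K)) by (field; lra).
  now apply Rmult_lt_compat_l.
Qed.

Lemma continuous_on2_section (I J : R -> Prop) (h : R -> R -> R) l :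
  continuous_on2 I J h -> J l -> continuous_on I (fun y => h y l).
Proof.
  intros Hcont Jl x Ix e He.
  destruct (Hcont x l Ix Jl e He) as [d [Hd Hnear]].
  exists d; split; [exact Hd|].
  intros y Iy Hy; apply Hnear; auto.
  now rewrite Rminus_diag, Rabs_R0.
Qed.

Theorem mainTheorem2
  (I J : R -> Prop) (f : R -> R -> R) (lam0 x : R)
  (HI : is_interval I) (HJ : is_interval J)
  (Hmaps : forall y l, I y -> J l -> I (f y l))
  (HC1 : C1_on2 I J f)
  (HC2 : forall l, J l -> C2_on I (fun y => f y l))
  (Hlam0 : J lam0) (Hx : I x)
  (* (x, lam0) is a chain explosion point, with the explosion from below *)
  (Hcr : chain_recurrent I (fun y => f y lam0) x)
  (Hexpl : exists delta eta, 0 < delta /\ 0 < eta /\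
     forall l, J l -> lam0 - eta < l < lam0 ->
       forall y, I y -> Rabs (y - x) < delta ->
         ~ chain_recurrent I (fun z => f z l) y) :
  chain_recurrent I (fun y => f y lam0) (f x lam0) /\
  (forall xm1, I xm1 -> f xm1 lam0 = x ->
     exists delta1 eta1, 0 < delta1 /\ 0 < eta1 /\
       forall l, J l -> lam0 - eta1 < l < lam0 ->
         forall y, I y -> Rabs (y - xm1) < delta1 ->
           ~ chain_recurrent I (fun z => f z l) y).
Proof.
  pose proof (C1_on2_continuous_on2 I J f HC1) as Hcont.
  assert (Himage : forall l y, J l -> chain_recurrent I (fun z => f z l) y ->
            chain_recurrent I (fun z => f z l) (f y l)).
  { intros l y Jl.
    apply chain_recurrent_image; [intros u Iu; now apply Hmaps|].
    now apply continuous_on2_section with J. }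
  split; [now apply Himage|].
  intros xm1 Ixm1 Hxm1.
  destruct Hexpl as [delta [eta [Hdelta [Heta Hnocr]]]].
  destruct (Hcont xm1 lam0 Ixm1 Hlam0 delta Hdelta) as [d [Hd Hnear]].
  exists d, (Rmin eta d); split; [exact Hd|]; split; [now apply Rmin_pos|].
  intros l Jl Hl y Iy Hy Hcry.
  pose proof (Rmin_l eta d); pose proof (Rmin_r eta d).
  apply (Hnocr l Jl ltac:(lra) (f y l) (Hmaps y l Iy Jl)); [|now apply Himage].
  rewrite <- Hxm1; apply Hnear; auto.
  rewrite Rabs_left; lra.
Qed.
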